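(* Let $A\in\mathbb{R}^{n\times n}$, $V=\{v_1,\ldots,v_n\}$, $T>0$ and $\epsilon>0$. For $S\subset V$ let $B(S)=\mathrm{diag}(\mathbf{1}(S))$, let $W_T(S)=\int_0^T e^{A\tau}B(S)B(S)^\top e^{A^\top\tau}\,d\tau$, and let $F(S)=\mathrm{tr}\big((W_T(S)+\epsilon I)^{-1}\big)$. Then $F$ is strictly decreasing: for all $S_1\subsetneqq S_2\subset V$, $F(S_2)<F(S_1)$.
   Context: $\mathbf{1}(S)\in\mathbb{R}^n$ is the vector whose $i$th entry is $1$ if $v_i\in S$ and $0$ otherwise, so $B(S)$ is the diagonal $0/1$ matrix selecting the coordinates indexed by $S$; this corresponds to the control system $\dot x=Ax+B(S)u$. $W_T(S)$ is its controllability Gramian on $[0,T]$. *)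

From mathcomp Require Import all_boot all_order all_algebra.
From mathcomp Require Import all_classical all_reals all_analysis.
Set Implicit Arguments. Unset Strict Implicit. Unset Printing Implicit Defensive.
Import Order.TTheory GRing.Theory Num.Theory.
Import numFieldNormedType.Exports.
Local Open Scope ring_scope.
Local Open Scope classical_set_scope.

Section Defs.
Variables (R : realType) (n : nat).

Definition expmx (M : 'M[R]_n) : 'M[R]_n :=
  \matrix_(i, j) limn (series (fun k : nat => (k`!%:R)^-1 * (M ^+ k) i j)).

Definition Bsel (S : {set 'I_n}) : 'M[R]_n :=
  diag_mx (\row_i (if i \in S then 1 else 0)).

Definition gramian (A : 'M[R]_n) (T : R) (S : {set 'I_n}) : 'M[R]_n :=
  \matrix_(i, j) Rintegral lebesgue_measure `[0, T]
     (fun tau : R => (expmx (tau *: A) *m Bsel S *m (Bsel S)^T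
                        *m expmx (tau *: A^T)) i j).

Definition Fobj (A : 'M[R]_n) (T eps : R) (S : {set 'I_n}) : R :=
  \tr (invmx (gramian A T S + eps%:M)).

End Defs.

(* W_T(S) is the sum over k in S of the Gram matrices G_k of the columns
   t |-> e^{tA} e_k in L^2[0, T].  Each G_k is positive semidefinite, and
   (G_k)_kk = \int_0^T ((e^{tA})_kk)^2 dt > 0 because (e^{tA})_kk is close
   to 1 for small t.  Hence W_T(S2) = W_T(S1) + D with D positive
   semidefinite and nonzero.  For X = W_T(S1) + eps I, P = X^-1 and
   Q = (X + D)^-1, the resolvent identity P - Q = P D Q = Q D P gives
   P - Q = Q D Q + (D Q)^T P (D Q), whose trace is positive: the second term
   is positive semidefinite and Q D Q is positive semidefinite and nonzero. *)

From mathcomp Require Import all_boot all_order all_algebra.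
From mathcomp Require Import all_classical all_reals all_analysis.
From mathcomp Require Import measurable_realfun ring lra.
Import Order.TTheory GRing.Theory Num.Theory.
Import numFieldNormedType.Exports.

Set Implicit Arguments.
Unset Strict Implicit.
Unset Printing Implicit Defensive.

Local Open Scope ring_scope.
Local Open Scope classical_set_scope.

Section QuadraticForms.
Variables (R : realFieldType) (n : nat).
Implicit Types (M N : 'M[R]_n) (x y : 'rV[R]_n).

Definition bform M x y : R := (x *m M *m y^T) 0 0.
Definition qform M x : R := bform M x x.
Definition psdmx M := forall x, 0 <= qform M x.
Definition pdmx M := forall x, x != 0 -> 0 < qform M x.

Lemma mulmx_trmx_selfE x : (x *m x^T) 0 0 = \sum_a x 0 a ^+ 2.
Proof. by rewrite mxE; apply: eq_bigr => a _; rewrite mxE expr2. Qed.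

Lemma mulmx_trmx_self_ge0 x : 0 <= (x *m x^T) 0 0.
Proof. by rewrite mulmx_trmx_selfE; apply: sumr_ge0 => a _; exact: sqr_ge0. Qed.

Lemma mulmx_trmx_self_eq0 x : ((x *m x^T) 0 0 == 0) = (x == 0).
Proof.
apply/idP/eqP => [|->]; last by rewrite mul0mx mxE.
rewrite mulmx_trmx_selfE psumr_eq0 => [/allP x0|a _]; last exact: sqr_ge0.
apply/rowP => a; rewrite mxE; apply/eqP; rewrite -sqrf_eq0.
exact: implyP (x0 a (mem_index_enum a)) isT.
Qed.

Lemma qformE M x : qform M x = \sum_a \sum_b x 0 a * M a b * x 0 b.
Proof.
rewrite /qform /bform mxE exchange_big; apply: eq_bigr => b _.
by rewrite mxE mulr_suml; apply: eq_bigr => a _; rewrite !mxE.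
Qed.

Lemma qformD M N x : qform (M + N) x = qform M x + qform N x.
Proof. by rewrite /qform /bform mulmxDr mulmxDl mxE. Qed.

Lemma qform_scalar (a : R) x : qform a%:M x = a * (x *m x^T) 0 0.
Proof. by rewrite /qform /bform mul_mx_scalar -scalemxAl mxE. Qed.

Lemma qform_delta M i : qform M (delta_mx 0 i) = M i i.
Proof. by rewrite /qform /bform -rowE trmx_delta -colE !mxE. Qed.

Lemma bformC M x y : M^T = M -> bform M y x = bform M x y.
Proof.
have tr11 (B : 'M[R]_1) : B^T 0 0 = B 0 0 by rewrite mxE.
by move=> MT; rewrite /bform -[LHS]tr11 !trmx_mul trmxK MT mulmxA.
Qed.

Lemma qformBZ M x y (t : R) : M^T = M ->
  qform M (x - t *: y) = qform M x - 2 * t * bform M x y + t ^+ 2 * qform M y.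
Proof.
move=> MT; rewrite /qform /bform.
have -> : (x - t *: y)^T = x^T - t *: y^T by rewrite linearB linearZ.
rewrite !(mulmxBl, mulmxBr) -!(scalemxAl, scalemxAr) !mxE.
have := bformC x y MT; rewrite /bform !mxE => ->; ring.
Qed.

Lemma quadratic_ge0_linear_coef_eq0 (q b : R) : 0 <= q ->
  (forall t, 0 <= t ^+ 2 * q - 2 * t * b) -> b = 0.
Proof.
move=> q0 ge0; have q1 : q + 1 != 0 by rewrite lt0r_neq0 // ltr_wpDl.
have := ge0 (b / (q + 1)).
have -> : (b / (q + 1)) ^+ 2 * q - 2 * (b / (q + 1)) * b
          = - ((b / (q + 1)) ^+ 2 * (q + 2)) by field.
rewrite oppr_ge0 pmulr_lle0 ?ltr_wpDl // le_eqVlt ltNge sqr_ge0 orbF.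
by rewrite sqrf_eq0 mulf_eq0 invr_eq0 (negbTE q1) orbF => /eqP.
Qed.

Lemma psdmx_qform_eq0 M x : M^T = M -> psdmx M -> qform M x = 0 -> x *m M = 0.
Proof.
(* The linear coefficient of t |-> qform M (x - t *: x *m M) is -2 |x *m M|^2. *)
move=> MT psdM qx0; apply/eqP; rewrite -mulmx_trmx_self_eq0; apply/eqP.
apply: (quadratic_ge0_linear_coef_eq0 (psdM (x *m M))) => t.
by have := psdM (x - t *: (x *m M)); rewrite qformBZ // qx0 sub0r addrC.
Qed.

Lemma psdmxD M N : psdmx M -> psdmx N -> psdmx (M + N).
Proof. by move=> psdM psdN x; rewrite qformD addr_ge0. Qed.

Lemma psdmx_sum (I : finType) (P : pred I) (F : I -> 'M[R]_n) :
  (forall i, P i -> psdmx (F i)) -> psdmx (\sum_(i | P i) F i).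
Proof.
apply: big_ind => //; last exact: psdmxD.
by move=> x; rewrite /qform /bform mulmx0 mul0mx mxE.
Qed.

Lemma psdmx_diag_ge0 M i : psdmx M -> 0 <= M i i.
Proof. by move=> psdM; rewrite -qform_delta. Qed.

Lemma pdmx_psd M : pdmx M -> psdmx M.
Proof.
move=> pdM x; have [->|x0] := eqVneq x 0; last exact/ltW/pdM.
by rewrite /qform /bform trmx0 mulmx0 mxE.
Qed.

Lemma pdmx_scalar (a : R) : 0 < a -> pdmx a%:M.
Proof.
move=> a0 x x0; rewrite qform_scalar mulr_gt0 // lt0r mulmx_trmx_self_ge0 andbT.
by rewrite mulmx_trmx_self_eq0.
Qed.

Lemma pdmxDl M N : psdmx M -> pdmx N -> pdmx (M + N).
Proof. by move=> psdM pdN x x0; rewrite qformD ltr_wpDl ?pdN. Qed.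

Lemma pdmx_unit M : pdmx M -> M \in unitmx.
Proof.
move=> pdM; rewrite -row_free_unit -kermx_eq0; apply/rowV0P => x /sub_kermxP xM0.
apply/eqP/negP => /negP/pdM.
by rewrite /qform /bform xM0 mul0mx mxE ltxx.
Qed.

Lemma psdmx_invmx M : M^T = M -> pdmx M -> psdmx (invmx M).
Proof.
move=> MT pdM x; have := pdmx_psd pdM (x *m invmx M).
rewrite /qform /bform trmx_mul trmx_inv MT !mulmxA.
by rewrite -(mulmxA x (invmx M) M) mulVmx ?pdmx_unit // mulmx1.
Qed.

Lemma mxtrace_qformE m M (Z : 'M[R]_(n, m)) :
  \tr (Z^T *m M *m Z) = \sum_j qform M (row j Z^T).
Proof.
apply: eq_bigr => j _; rewrite /qform /bform.
by rewrite tr_row trmxK -row_mul mxE [RHS]mxE; apply: eq_bigr => k _; rewrite !mxE.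
Qed.

Lemma mxtrace_qform_ge0 m M (Z : 'M[R]_(n, m)) : psdmx M -> 0 <= \tr (Z^T *m M *m Z).
Proof. by move=> psdM; rewrite mxtrace_qformE sumr_ge0. Qed.

Lemma mxtrace_qform_gt0 M (Z : 'M[R]_n) : M^T = M -> psdmx M -> M != 0 ->
  Z \in unitmx -> 0 < \tr (Z^T *m M *m Z).
Proof.
move=> MT psdM M0 Zu; rewrite lt0r mxtrace_qform_ge0 // andbT.
apply: contra M0; rewrite mxtrace_qformE => /eqP/psumr_eq0P qZ0; apply/eqP.
have ZM0 : Z^T *m M = 0.
  apply/row_matrixP => j; rewrite row_mul row0.
  exact: psdmx_qform_eq0 MT psdM (qZ0 (fun i _ => psdM _) j isT).
by rewrite -[M]mul1mx -(@mulVmx _ _ Z^T) ?unitmx_tr // -mulmxA ZM0 mulmx0.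
Qed.

Lemma mxtrace_invmx_lt X D : X^T = X -> pdmx X -> D^T = D -> psdmx D -> D != 0 ->
  \tr (invmx (X + D)) < \tr (invmx X).
Proof.
move=> XT pdX DT psdD D0.
have pdXD : pdmx (X + D) by rewrite addrC; exact: pdmxDl.
have [uX uXD] := (pdmx_unit pdX, pdmx_unit pdXD).
set P := invmx X; set Q := invmx (X + D).
have QT : Q^T = Q by rewrite trmx_inv linearD /= XT DT.
have DE : D = (X + D) - X by rewrite addrAC subrr add0r.
have PDQ : P *m D *m Q = P - Q.
  by rewrite DE mulmxBr mulmxBl mulVmx // mul1mx -mulmxA mulmxV // mulmx1.
have QDP : Q *m D *m P = P - Q.
  by rewrite DE mulmxBr mulmxBl mulVmx // mul1mx -mulmxA mulmxV // mulmx1.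
have PQE : P - Q = Q^T *m D *m Q + (D *m Q)^T *m P *m (D *m Q).
  by rewrite trmx_mul QT DT !mulmxA QDP !mulmxBl PDQ [RHS]addrC subrK.
rewrite -subr_gt0 -linearB /= PQE mxtraceD.
have uQ : Q \in unitmx by rewrite unitmx_inv.
apply: lt_le_trans (mxtrace_qform_gt0 DT psdD D0 uQ) _.
by rewrite lerDl; apply/mxtrace_qform_ge0/psdmx_invmx.
Qed.

End QuadraticForms.

Lemma expR_mul1B_le1 (R : realType) (x : R) : expR x * (1 - x) <= 1.
Proof.
rewrite -[leRHS](expRxMexpNx_1 x) ler_wpM2l ?expR_ge0 //; exact: expR_ge1Dx.
Qed.

Lemma cvg_series_le_norm (R : realType) (u g : R ^nat) :
  (forall k, `|u k| <= g k) -> cvgn (series g) ->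
  cvgn (series u) /\ `|limn (series u)| <= limn (series g).
Proof.
move=> ug cg; have cn : cvgn [normed series u].
  by apply: (series_le_cvg _ _ ug cg) => k //; exact: le_trans (ug k).
split; first exact: normed_cvg.
exact: le_trans (lim_series_norm cn) (lim_series_le cn cg ug).
Qed.

Section MatrixExponential.
Variables (R : realType) (n : nat).
Implicit Types M : 'M[R]_n.

Definition mxnorm1 M : R := \sum_a \sum_b `|M a b|.

Lemma mxnorm1_ge0 M : 0 <= mxnorm1 M.
Proof. by apply: sumr_ge0 => a _; apply: sumr_ge0. Qed.

Lemma mxnorm1Z (t : R) M : mxnorm1 (t *: M) = `|t| * mxnorm1 M.
Proof.
rewrite /mxnorm1 mulr_sumr; apply: eq_bigr => a _.
by rewrite mulr_sumr; apply: eq_bigr => b _; rewrite mxE normrM.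
Qed.

Lemma normr_exprmx_le M k i j : `|(M ^+ k) i j| <= mxnorm1 M ^+ k.
Proof.
elim: k i j => [|k IHk] i j.
  by rewrite expr0 mxE; case: (i == j); rewrite ?normr1 ?normr0.
rewrite exprSr -mulmxE mxE exprSr; apply: le_trans (ler_norm_sum _ _ _) _.
apply: (@le_trans _ _ (\sum_l mxnorm1 M ^+ k * `|M l j|)).
  by apply: ler_sum => l _; rewrite normrM ler_wpM2r.
rewrite -mulr_sumr ler_wpM2l ?exprn_ge0 ?mxnorm1_ge0 //.
apply: ler_sum => l _; rewrite (bigD1 j) //= lerDl; exact: sumr_ge0.
Qed.

Definition expmx_term M i j : R ^nat := fun k => (k`!%:R)^-1 * (M ^+ k) i j.

Lemma expmx_term_le M i j k : `|expmx_term M i j k| <= exp_coeff (mxnorm1 M) k.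
Proof.
rewrite /expmx_term exp_coeffE normrM ger0_norm ?invr_ge0 //.
by rewrite ler_wpM2l ?invr_ge0 ?normr_exprmx_le.
Qed.

Lemma expmxE M i j : expmx M i j = limn (series (expmx_term M i j)).
Proof. by rewrite mxE. Qed.

Lemma is_cvg_expmx_series M i j : cvgn (series (expmx_term M i j)).
Proof.
exact: (cvg_series_le_norm (@expmx_term_le M i j) (is_cvg_series_exp_coeff _)).1.
Qed.

Lemma normr_expmx_le M i j : `|expmx M i j| <= expR (mxnorm1 M).
Proof.
rewrite expmxE.
exact: (cvg_series_le_norm (@expmx_term_le M i j) (is_cvg_series_exp_coeff _)).2.
Qed.

(* exp_coeff 0 is the indicator sequence of index 0, whose series sums to expR 0 = 1. *)
Lemma normr_expmx_diag_sub1_le M i : `|expmx M i i - 1| <= expR (mxnorm1 M) - 1.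
Proof.
set c := mxnorm1 M.
have cvgM := @is_cvg_expmx_series M i i.
have cvgc := is_cvg_series_exp_coeff c.
have cvg0 := is_cvg_series_exp_coeff (0 : R).
have tail_le k : `|(expmx_term M i i - exp_coeff 0) k| <= (exp_coeff c - exp_coeff 0) k.
  case: k => [|k]; rewrite !fctE !exp_coeffE /expmx_term.
    by rewrite !expr0 mxE eqxx !subrr normr0.
  by rewrite expr0n /= !mulr0 !subr0; have := @expmx_term_le M i i k.+1; rewrite exp_coeffE.
have [_] := cvg_series_le_norm tail_le (is_cvg_seriesB cvgc cvg0).
by rewrite !lim_seriesB // -expmxE -/(expR c) -/(expR 0) expR0.
Qed.

Lemma expmx_termZ (t : R) M i j k :
  expmx_term (t *: M) i j k = expmx_term M i j k * t ^+ k.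
Proof.
have ZX : (t *: M) ^+ k = t ^+ k *: M ^+ k.
  elim: k => [|k IHk]; first by rewrite !expr0 scale1r.
  by rewrite !exprS -!mulmxE IHk -scalemxAl -scalemxAr scalerA.
by rewrite /expmx_term ZX mxE mulrA mulrAC.
Qed.

Lemma expmx_tr M : expmx M^T = (expmx M)^T.
Proof.
have trX k : M^T ^+ k = (M ^+ k)^T.
  elim: k => [|k IHk]; first by rewrite !expr0 tr_scalar_mx.
  by rewrite exprS exprSr -!mulmxE IHk trmx_mul.
apply/matrixP => i j; rewrite [RHS]mxE !expmxE; congr (limn (series _)).
by apply/funext => k; rewrite /expmx_term trX mxE.
Qed.

End MatrixExponential.

Section GramIntegral.
Context d (T : measurableType d) (R : realType) (mu : {measure set T -> \bar R}).
Variable D : set T.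
Hypothesis mD : measurable D.

Lemma Rintegral_sum (I : Type) (s : seq I) (P : pred I) (f : I -> T -> R) :
  (forall i, mu.-integrable D (EFin \o f i)) ->
  \int[mu]_(x in D) (\sum_(i <- s | P i) f i x) =
  \sum_(i <- s | P i) \int[mu]_(x in D) f i x.
Proof.
move=> intf; rewrite /Rintegral sum_fine; last first.
  by move=> i _; exact: (integrable_fin_num _ (intf i)).
rewrite -integral_sum //; congr fine; apply: eq_integral => x _.
by rewrite sumEFin.
Qed.

Lemma Rintegral_ge_cst (E : set T) (f : T -> R) (c : R) :
  measurable E -> E `<=` D -> mu.-integrable D (EFin \o f) ->
  (forall x, D x -> 0 <= f x) -> 0 <= c -> (forall x, E x -> c <= f x) ->
  (c%:E * mu E <= (\int[mu]_(x in D) f x)%:E)%E.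
Proof.
move=> mE ED intf f0 c0 cf; have mf := measurable_int mu intf.
rewrite fineK ?integrable_fin_num // -integral_cst //.
have mfE := measurable_funS mD ED mf.
apply: (@le_trans _ _ (\int[mu]_(x in E) (f x)%:E)%E).
  by apply: ge0_le_integral => // x Ex; rewrite lee_fin ?cf.
by apply: ge0_subset_integral => // x Dx; rewrite lee_fin f0.
Qed.

Definition gram_mx n (f : 'I_n -> T -> R) : 'M[R]_n :=
  \matrix_(i, j) \int[mu]_(x in D) (f i x * f j x).

Lemma gram_mx_tr n (f : 'I_n -> T -> R) : (gram_mx f)^T = gram_mx f.
Proof. by apply/matrixP => i j; rewrite !mxE; under eq_Rintegral do rewrite mulrC. Qed.

Lemma gram_mx_psd n (f : 'I_n -> T -> R) :
  (forall i j, mu.-integrable D (EFin \o (fun x => f i x * f j x))) ->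
  psdmx (gram_mx f).
Proof.
move=> intf y; rewrite qformE pair_bigA /=.
have sqE x : (\sum_a y 0 a * f a x) ^+ 2 =
             \sum_p (y 0 p.1 * y 0 p.2) * (f p.1 x * f p.2 x).
  rewrite expr2 mulr_suml; under eq_bigr do rewrite mulr_sumr.
  by rewrite pair_bigA; apply: eq_bigr => p _; ring.
have intZ (p : 'I_n * 'I_n) :
    mu.-integrable D (EFin \o (fun x => y 0 p.1 * y 0 p.2 * (f p.1 x * f p.2 x))).
  apply: eq_integrable mD _ _ _ (integrableZl mD (y 0 p.1 * y 0 p.2) (intf p.1 p.2)) => x _.
  by rewrite /= EFinM.
have -> : \sum_p y 0 p.1 * gram_mx f p.1 p.2 * y 0 p.2 =
          \int[mu]_(x in D) (\sum_a y 0 a * f a x) ^+ 2.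
  under [RHS]eq_Rintegral do rewrite sqE.
  rewrite Rintegral_sum //; apply: eq_bigr => p _.
  by rewrite RintegralZl // mxE; ring.
by apply: Rintegral_ge0 => x _; exact: sqr_ge0.
Qed.

End GramIntegral.

Lemma Bsel_mul_tr (R : realType) n (S : {set 'I_n}) : Bsel R S *m (Bsel R S)^T = Bsel R S.
Proof.
rewrite /Bsel tr_diag_mx mulmx_diag; congr diag_mx; apply/rowP => k.
by rewrite !mxE; case: (k \in S); rewrite ?mulr1 ?mulr0.
Qed.

Section Gramian.
Variables (R : realType) (n : nat) (A : 'M[R]_n) (T : R).

Local Notation mu := (@lebesgue_measure R).
Local Notation D := (`[0, T] : set R).
Local Notation E t := (expmx (t *: A)).

Lemma measurable_expmx_entry i j : measurable_fun setT (fun t : R => E t i j).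
Proof.
(* The partial sums of the exponential series are polynomials in t. *)
have lim_measurable := @measurable_fun_cvg _ R R setT
  (fun m t => series (expmx_term (t *: A) i j) m) (fun t => E t i j).
apply: lim_measurable.
  elim=> [|m IHm].
    by under eq_fun do rewrite seriesEnat /= big_geq //; exact: measurable_cst.
  under eq_fun do rewrite seriesSr expmx_termZ.
  by apply: measurable_funD => //; apply: measurable_funM => //; exact: measurable_cst.
by move=> t _; rewrite expmxE; exact: is_cvg_expmx_series.
Qed.

Lemma normr_expmx_entry_le t i j : 0 <= t <= T -> `|E t i j| <= expR (T * mxnorm1 A).
Proof.
move=> /andP[t0 tT]; apply: (le_trans (normr_expmx_le (t *: A) i j)).
by rewrite ler_expR mxnorm1Z ger0_norm // ler_wpM2r // mxnorm1_ge0.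
Qed.

Lemma integrable_expmx_entry_mul i j k l :
  mu.-integrable D (EFin \o (fun t => E t i k * E t j l)).
Proof.
apply: measurable_bounded_integrable => //.
- exact: (compact_finite_measure (@segment_compact R 0 T)).
- apply: (measurable_funS measurableT (@subsetT _ _)).
  by apply: measurable_funM; exact: measurable_expmx_entry.
- apply: filterS (nbhs_pinfty_ge (num_real (expR (T * mxnorm1 A) ^+ 2))).
  move=> M bndM t /=; rewrite in_itv /= => tD; apply: le_trans bndM.
  by rewrite normrM expr2 ler_pM // normr_expmx_entry_le.
Qed.

Lemma gramian_integrandE (S : {set 'I_n}) t i j :
  (E t *m Bsel R S *m (Bsel R S)^T *m expmx (t *: A^T)) i j =
  \sum_(k in S) E t i k * E t j k.
Proof.
have -> : t *: A^T = (t *: A)^T by rewrite linearZ.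
rewrite expmx_tr -(mulmxA (E t)) Bsel_mul_tr /Bsel mul_mx_diag mxE [RHS]big_mkcond /=.
by apply: eq_bigr => k _; rewrite !mxE; case: (k \in S); rewrite ?mulr1 ?mulr0 ?mul0r.
Qed.

Lemma gramianE (S : {set 'I_n}) :
  gramian A T S = \sum_(k in S) gram_mx mu D (fun i t => E t i k).
Proof.
apply/matrixP => i j; rewrite /gramian summxE mxE.
under eq_Rintegral do rewrite gramian_integrandE.
rewrite Rintegral_sum //; first by apply: eq_bigr => k _; rewrite mxE.
by move=> k; exact: integrable_expmx_entry_mul.
Qed.

Lemma gramian_tr (S : {set 'I_n}) : (gramian A T S)^T = gramian A T S.
Proof. by rewrite gramianE linear_sum /=; apply: eq_bigr => k _; rewrite gram_mx_tr. Qed.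

Lemma gramian_psd (S : {set 'I_n}) : psdmx (gramian A T S).
Proof.
rewrite gramianE; apply: psdmx_sum => k _; apply: gram_mx_psd => //= i j.
exact: integrable_expmx_entry_mul.
Qed.

Lemma gramian_setD (S1 S2 : {set 'I_n}) : S1 \subset S2 ->
  gramian A T S2 = gramian A T S1 + gramian A T (S2 :\: S1).
Proof. by move=> /finset.setIidPr S21; rewrite !gramianE (big_setID S1) /= S21. Qed.

Lemma expmx_diag_ge_half t i : `|t| * mxnorm1 A <= 1/3 -> 1/2 <= E t i i.
Proof.
move=> tc; have := normr_expmx_diag_sub1_le (t *: A) i.
rewrite mxnorm1Z ler_norml => /andP[lb _].
have := expR_mul1B_le1 (`|t| * mxnorm1 A); have := expR_ge0 (`|t| * mxnorm1 A).
nra.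
Qed.

Lemma Rintegral_sqr_expmx_diag_gt0 i : 0 < T -> 0 < \int[mu]_(t in D) (E t i i * E t i i).
Proof.
move=> T0; set c := mxnorm1 A; have c0 : 0 <= c := mxnorm1_ge0 A.
(* r is so small that the diagonal entry stays above 1/2 on [0, r]. *)
set u := (3 * (c + 1))^-1; have u0 : 0 < u by rewrite invr_gt0; lra.
have uE : u * (3 * (c + 1)) = 1 by rewrite mulVf //; lra.
set r := Num.min T u.
have r0 : 0 < r by rewrite lt_min T0 u0.
have rT : r <= T by rewrite ge_min lexx.
have ru : r <= u by rewrite ge_min lexx orbT.
have sub : `[0, r] `<=` D.
  by move=> t /=; rewrite !in_itv /= => /andP[-> /le_trans/(_ rT)].
have lb t : `[0, r] t -> 1/4 <= E t i i * E t i i.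
  rewrite /= in_itv /= => /andP[t0 tr].
  have /expmx_diag_ge_half half : `|t| * c <= 1/3 by rewrite ger0_norm //; nra.
  by have := half i; nra.
have q0 : 0 <= 1/4 :> R by lra.
have : ((1/4)%:E * mu `[0%R, r] <= (\int[mu]_(t in D) (E t i i * E t i i))%:E)%E.
  apply: (@Rintegral_ge_cst _ _ _ mu D _ `[0%R, r] _ (1/4)) => //.
    exact: integrable_expmx_entry_mul.
  by move=> t _; exact: sqr_ge0.
have mur : mu `[0, r] = r%:E.
  by rewrite lebesgue_measure_itv /= lte_fin r0 oppr0 adde0.
rewrite mur -EFinM lee_fin.
by apply: lt_le_trans; rewrite mulr_gt0.
Qed.

Lemma gramian_diag_gt0 (S : {set 'I_n}) i : 0 < T -> i \in S -> 0 < gramian A T S i i.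
Proof.
move=> T0 iS; rewrite gramianE summxE (bigD1 i) //= mxE.
apply: ltr_pwDl (Rintegral_sqr_expmx_diag_gt0 i T0) _.
apply: sumr_ge0 => k _; apply: psdmx_diag_ge0; apply: gram_mx_psd => // j l.
exact: integrable_expmx_entry_mul.
Qed.

End Gramian.

Theorem lemma1 (R : realType) (n : nat) (A : 'M[R]_n) (T eps : R) :
  0 < T -> 0 < eps ->
  forall S1 S2 : {set 'I_n}, S1 \proper S2 ->
    Fobj A T eps S2 < Fobj A T eps S1.
Proof.
move=> T0 eps0 S1 S2 /properP[S12 [i iS2 iS1]].
have iD : i \in S2 :\: S1 by rewrite inE iS1 iS2.
rewrite /Fobj (gramian_setD _ _ S12) addrAC.
apply: mxtrace_invmx_lt.
- by rewrite linearD /= gramian_tr tr_scalar_mx.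
- exact/pdmxDl/pdmx_scalar/eps0/gramian_psd.
- exact: gramian_tr.
- exact: gramian_psd.
- apply/negP => /eqP D0; have := gramian_diag_gt0 A T0 iD.
  by rewrite D0 mxE ltxx.
Qed.
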